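(* Let $(M,g,\varphi,\eta,\zeta)$ be an almost contact metric manifold of dimension $2n+1$ with $U(n)\times1$ intrinsic torsion $\xi$. Then $$s^{\rm alt}_{\mathfrak u(n)^\perp}=\tfrac12(i_8-i_{10}+i_{12}+i_{14})+2(i_7-i_{17}),\qquad s_{\mathfrak u(n)^\perp}=\tfrac12(s-s^* )+\mathrm{Ric}(\zeta,\zeta).$$
   Context: $(M,g)$ is an oriented Riemannian manifold of dimension $2n+1$ with Levi-Civita connection $\nabla$, a unit vector field $\zeta$, its dual one-form $\eta=g(\cdot,\zeta)$, and an endomorphism $\varphi$ with $\varphi^2X=-X+\eta(X)\zeta$ and $g(\varphi X,\varphi Y)=g(X,Y)-\eta(X)\eta(Y)$. This is a $U(n)\times1$-structure; $\mathfrak{so}(TM)=\mathfrak u(n)\oplus\mathfrak u(n)^\perp$ (orthogonal for the Killing form), and the projection onto $\mathfrak u(n)^\perp$ is $A\mapsto\frac12\big(A+\varphi A\varphi+\eta(A\,\cdot)\zeta+\eta(\cdot)A\zeta\big)$. The intrinsic torsion is $\xi_XY=\nabla^{U(n)}_XY-\nabla_XY$ where $\nabla^{U(n)}$ is induced by the $\mathfrak u(n)$-component of the Levi-Civita connection form; explicitly $\xi_XY=\frac12(\nabla_X\varphi)\varphi Y+\frac12(\nabla_X\eta)(Y)\zeta-\eta(Y)\nabla_X\zeta$. Conventions: $R(X,Y)=[\nabla_X,\nabla_Y]-\nabla_{[X,Y]}$; $(e_1,\dots,e_{2n})$ a local orthonormal frame of $\ker\eta$, completed by $\zeta$ to a frame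 $(E_a)$ of $TM$; $s=\sum_{a,b}g(R(E_a,E_b)E_b,E_a)$; $s^*=\sum_{a,b}g(R(E_a,E_b)\varphi E_b,\varphi E_a)$; $\mathrm{Ric}(X,Y)=\sum_ag(R(X,E_a)E_a,Y)$; $s_{\mathfrak u(n)^\perp}=\sum_{a,b}g(R(E_a,E_b)_{\mathfrak u(n)^\perp}E_b,E_a)$; $s^{\rm alt}_{\mathfrak u(n)^\perp}=\sum_{a,b}g([\xi_{E_a},\xi_{E_b}]_{\mathfrak u(n)^\perp}E_b,E_a)$. With $\alpha(X,Y,Z)=g(\xi_XY,Z)$ and indices $i,j,k$ running over $1,\dots,2n$: $i_7=\sum_{j,k}\alpha(\zeta,e_j,e_k)\alpha(e_j,\zeta,e_k)$, $i_8=\sum_{i,j}\alpha(e_i,e_j,\zeta)\alpha(e_j,e_i,\zeta)$, $i_{10}=\sum_{i,j}\alpha(e_i,e_i,\zeta)\alpha(e_j,e_j,\zeta)$, $i_{12}=\sum_{i,j}\alpha(e_i,e_j,\zeta)\alpha(\varphi e_j,\varphi e_i,\zeta)$, $i_{14}=\sum_{i,j}\alpha(e_i,\varphi e_i,\zeta)\alpha(e_j,\varphi e_j,\zeta)$, $i_{17}=\sum_{i,k}\alpha(e_i,e_i,e_k)\alpha(\zeta,\zeta,e_k)$. *)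

(* Pointwise (linear-algebraic) model of an almost contact
   metric manifold of dimension 2n+1 at a point, expressed in a local
   orthonormal frame (E_a) = (e_1,...,e_2n, zeta). *)
From HB Require Import structures.
From mathcomp Require Import all_boot all_order all_algebra.
Set Implicit Arguments. Unset Strict Implicit. Unset Printing Implicit Defensive.
Import Order.TTheory GRing.Theory Num.Theory.
Local Open Scope ring_scope.

Section ACM.
Variable R : realFieldType.
Variable n : nat.
Notation m := (n.*2).+1.
Notation vec := 'cV[R]_m.
Notation endo := 'M[R]_m.

Definition E (a : 'I_m) : vec := \col_(j < m) (j == a)%:R.
(* the metric g (orthonormal frame => Euclidean dot product) *)
Definition g (X Y : vec) : R := (X^T *m Y) 0 0.
Definition zeta : vec := E ord_max.
Definition eta (X : vec) : R := g X zeta.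

Definition acm_structure (phi : endo) : Prop :=
  (forall X : vec, phi *m (phi *m X) = - X + eta X *: zeta) /\
  (forall X Y : vec, g (phi *m X) (phi *m Y) = g X Y - eta X * eta Y).

(* projection so(TM) -> u(n)^perp *)
Definition proj_perp (phi A : endo) : endo :=
  2^-1 *: (A + phi *m A *m phi + zeta *m (zeta^T *m A) + (A *m zeta) *m zeta^T).

(* Levi-Civita connection at the point: nabla_{E_a} E_b = Gamma a *m E_b, with
   Gamma a skew (metric); phi and zeta have constant components in the frame *)
Definition nabla_phi (Gamma : 'I_m -> endo) (phi : endo) (a : 'I_m) : endo :=
  Gamma a *m phi - phi *m Gamma a.
Definition nabla_zeta (Gamma : 'I_m -> endo) (a : 'I_m) : vec := Gamma a *m zeta.
Definition nabla_eta (Gamma : 'I_m -> endo) (a : 'I_m) (Y : vec) : R :=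
  g Y (nabla_zeta Gamma a).

(* intrinsic torsion xi_{E_a} Y =
   1/2 (nabla_a phi) phi Y + 1/2 (nabla_a eta)(Y) zeta - eta(Y) nabla_a zeta *)
Definition xi (Gamma : 'I_m -> endo) (phi : endo) (a : 'I_m) : endo :=
  2^-1 *: (nabla_phi Gamma phi a *m phi)
  + 2^-1 *: (zeta *m (nabla_zeta Gamma a)^T)
  - (nabla_zeta Gamma a) *m zeta^T.

Definition xiv (Gamma : 'I_m -> endo) (phi : endo) (X : vec) : endo :=
  \sum_(a < m) X a 0 *: xi Gamma phi a.

Definition alpha Gamma phi (X Y Z : vec) : R := g (xiv Gamma phi X *m Y) Z.

(* indices i of e_i : those a <> ord_max (i.e. a < 2n) *)
Definition i7 Gamma phi : R :=
  \sum_(j < m | j != ord_max) \sum_(k < m | k != ord_max)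
    alpha Gamma phi zeta (E j) (E k) * alpha Gamma phi (E j) zeta (E k).
Definition i8 Gamma phi : R :=
  \sum_(i < m | i != ord_max) \sum_(j < m | j != ord_max)
    alpha Gamma phi (E i) (E j) zeta * alpha Gamma phi (E j) (E i) zeta.
Definition i10 Gamma phi : R :=
  \sum_(i < m | i != ord_max) \sum_(j < m | j != ord_max)
    alpha Gamma phi (E i) (E i) zeta * alpha Gamma phi (E j) (E j) zeta.
Definition i12 Gamma phi : R :=
  \sum_(i < m | i != ord_max) \sum_(j < m | j != ord_max)
    alpha Gamma phi (E i) (E j) zeta
    * alpha Gamma phi (phi *m E j) (phi *m E i) zeta.
Definition i14 Gamma phi : R :=
  \sum_(i < m | i != ord_max) \sum_(j < m | j != ord_max)
    alpha Gamma phi (E i) (phi *m E i) zeta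
    * alpha Gamma phi (E j) (phi *m E j) zeta.
Definition i17 Gamma phi : R :=
  \sum_(i < m | i != ord_max) \sum_(k < m | k != ord_max)
    alpha Gamma phi (E i) (E i) (E k) * alpha Gamma phi zeta zeta (E k).

Definition s_alt_perp Gamma phi : R :=
  \sum_(a < m) \sum_(b < m)
    g (proj_perp phi (xi Gamma phi a *m xi Gamma phi b
                      - xi Gamma phi b *m xi Gamma phi a) *m E b) (E a).

(* curvature at the point: Rm a b is the endomorphism R(E_a, E_b) *)
Definition algebraic_curvature (Rm : 'I_m -> 'I_m -> endo) : Prop :=
  (forall a b, Rm b a = - Rm a b) /\
  (forall a b, (Rm a b)^T = - Rm a b) /\
  (forall a b c d, g (Rm a b *m E c) (E d) = g (Rm c d *m E a) (E b)) /\
  (forall a b c, Rm a b *m E c + Rm b c *m E a + Rm c a *m E b = 0).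

Definition scal (Rm : 'I_m -> 'I_m -> endo) : R :=
  \sum_(a < m) \sum_(b < m) g (Rm a b *m E b) (E a).
Definition scal_star (Rm : 'I_m -> 'I_m -> endo) (phi : endo) : R :=
  \sum_(a < m) \sum_(b < m) g (Rm a b *m (phi *m E b)) (phi *m E a).
Definition Ric (Rm : 'I_m -> 'I_m -> endo) (X Y : vec) : R :=
  \sum_(a < m) g (\sum_(c < m) X c 0 *: Rm c a *m E a) Y.
Definition s_perp (Rm : 'I_m -> 'I_m -> endo) (phi : endo) : R :=
  \sum_(a < m) \sum_(b < m) g (proj_perp phi (Rm a b) *m E b) (E a).

End ACM.

From Pilot Require Import Defs.
From HB Require Import structures.
From mathcomp Require Import all_boot all_order all_algebra.
From mathcomp Require Import ring lra.
Import Order.TTheory GRing.Theory Num.Theory.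
Local Open Scope ring_scope.
Set Implicit Arguments. Unset Strict Implicit. Unset Printing Implicit Defensive.

(* Everything is linear algebra at a point, in the orthonormal frame, with
   [Z = zeta zeta^T] and [phi^2 = Z - 1].  The torsion [xi_a] is minus the
   u(n)^perp-part of the skew connection matrix [Gamma_a], and a skew matrix
   lies in u(n)^perp iff it anticommutes with [phi] up to terms through [zeta].
   Applying this rule to both factors, [phi [xi_a, xi_b] phi] equals
   [- [xi_a, xi_b]] up to terms in which [Z] stands next to [xi_a] or [xi_b];
   hence the u(n)^perp-part of [[xi_a, xi_b]] only involves [xi_a Z xi_b],
   [phi xi_a Z xi_b phi] and the [zeta]-row and -column of the commutator,
   whose contractions over [(a, b)] are the invariants [i_7, ..., i_17].
   The second formula is the same contraction of the u(n)^perp-part of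
   [R(E_a, E_b)]: the [phi . phi] part gives [-s^*], and both [zeta]-parts
   give [Ric(zeta, zeta)] by the skew symmetries of [R]. *)

Section Frame.
Variables (R : realFieldType) (n : nat).
Local Notation m := (n.*2).+1.
Local Notation mx := 'M[R]_m.
Local Notation vec := 'cV[R]_m.
Local Notation E := (@E R n).
Local Notation zeta := (zeta R n).
Local Notation zi := (@ord_max n.*2).
Local Notation Z := (zeta *m zeta^T).

Lemma sum_mul_delta (F : 'I_m -> R) a : \sum_k F k * (k == a)%:R = F a.
Proof.
by rewrite (bigD1 a) //= eqxx mulr1 big1 ?addr0 // => k /negbTE ->; rewrite mulr0.
Qed.

Lemma sum_delta_mul (F : 'I_m -> R) a : \sum_k (k == a)%:R * F k = F a.
Proof. by under eq_bigr do rewrite mulrC; rewrite sum_mul_delta. Qed.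

Lemma E_entry a j : E a j 0 = (j == a)%:R.
Proof. by rewrite mxE. Qed.

Lemma zeta_entry j : zeta j 0 = (j == zi)%:R.
Proof. exact: E_entry. Qed.

Lemma mulmxE_entry (A : mx) i j : (A *m E j) i 0 = A i j.
Proof. by rewrite mxE; under eq_bigr do rewrite E_entry; rewrite sum_mul_delta. Qed.

Lemma mx_ext_mulmx (A B : mx) : (forall X : vec, A *m X = B *m X) -> A = B.
Proof. by move=> AB; apply/matrixP=> i j; rewrite -!mulmxE_entry AB. Qed.

Lemma g_sym (X Y : vec) : g X Y = g Y X.
Proof. by rewrite /g !mxE; apply: eq_bigr => k _; rewrite !mxE mulrC. Qed.

Lemma g_E (X : vec) a : g X (E a) = X a 0.
Proof. by rewrite /g mxE; under eq_bigr do rewrite E_entry mxE; rewrite sum_mul_delta. Qed.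

Lemma g_mulmxE (A : mx) a b : g (A *m E b) (E a) = A a b.
Proof. by rewrite g_E mulmxE_entry. Qed.

Lemma g_mulmxl (A : mx) (X Y : vec) : g (A *m X) Y = g X (A^T *m Y).
Proof. by rewrite /g trmx_mul mulmxA. Qed.

Lemma trmx_zeta_zeta : zeta^T *m zeta = 1%:M.
Proof.
apply/matrixP=> i j; rewrite !ord1 !mxE.
by under eq_bigr do rewrite !mxE; rewrite sum_mul_delta eqxx.
Qed.

Lemma eta_scale (X : vec) : Defs.eta X *: zeta = Z *m X.
Proof.
apply/matrixP=> i j; rewrite !ord1 !mxE /Defs.eta /g mxE mulr_suml.
by apply: eq_bigr => k _; rewrite !mxE big_ord1 !mxE; ring.
Qed.

Lemma trmx_mul_self_eq0 (v : vec) : v^T *m v = 0 -> v = 0.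
Proof.
move=> /matrixP /(_ 0 0); rewrite !mxE; under eq_bigr do rewrite mxE.
move=> /(psumr_eq0P (fun k _ => sqr_ge0 (v k 0))) v0.
by apply/matrixP=> i j; rewrite ord1 mxE; apply/eqP; rewrite -sqrf_eq0 v0.
Qed.

Lemma skew_entry (A : mx) i j : A^T = - A -> A i j = - A j i.
Proof. by move=> /matrixP /(_ j i); rewrite !mxE. Qed.

Lemma skew_zeta (A : mx) : A^T = - A -> zeta^T *m A *m zeta = 0.
Proof.
move=> skA; apply/matrixP=> i j; rewrite !ord1 [RHS]mxE.
have /matrixP /(_ 0 0) : (zeta^T *m A *m zeta)^T = - (zeta^T *m A *m zeta).
  by rewrite !trmx_mul trmxK skA mulNmx mulmxN mulmxA.
rewrite !mxE; lra.
Qed.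

Lemma mulmxZ_entry (A : mx) a b : (A *m Z) a b = A a zi * (b == zi)%:R.
Proof. by rewrite mulmxA mxE big_ord1 [zeta^T _ _]mxE zeta_entry mulmxE_entry. Qed.

Lemma Zmulmx_entry (A : mx) a b : (Z *m A) a b = (a == zi)%:R * A zi b.
Proof.
rewrite -mulmxA mxE big_ord1 zeta_entry mxE.
by under eq_bigr do rewrite mxE zeta_entry; rewrite sum_delta_mul.
Qed.

Lemma mulmxZmulmx_entry (A B : mx) a b : (A *m Z *m B) a b = A a zi * B zi b.
Proof.
rewrite -mulmxA mxE; under eq_bigr do rewrite Zmulmx_entry mulrA mulrAC.
by rewrite sum_mul_delta.
Qed.

Lemma commutator_skew (A B : mx) : A^T = - A -> B^T = - B ->
  (A *m B - B *m A)^T = - (A *m B - B *m A).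
Proof.
by move=> skA skB; rewrite raddfB /= !trmx_mul skA skB !mulmxN !mulNmx !opprK opprB.
Qed.

Lemma sum_neq_max (F : 'I_m -> R) : \sum_(i | i != zi) F i = \sum_i F i - F zi.
Proof. by rewrite [X in _ = X - _](bigD1 zi) //= addrC addrK. Qed.

Lemma sum_neq_max2 (F : 'I_m -> 'I_m -> R) :
  (forall i, F i zi = 0) -> (forall j, F zi j = 0) ->
  \sum_(i | i != zi) \sum_(j | j != zi) F i j = \sum_i \sum_j F i j.
Proof.
move=> Fi0 F0j; under eq_bigr do rewrite sum_neq_max Fi0 subr0.
by rewrite sum_neq_max [\sum_j F zi j]big1 ?subr0.
Qed.

Definition contract (F : 'I_m -> 'I_m -> mx) : R := \sum_a \sum_b F a b a b.

Lemma eq_contract (F G : 'I_m -> 'I_m -> mx) :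
  (forall a b, F a b = G a b) -> contract F = contract G.
Proof. by move=> FG; apply: eq_bigr => a _; apply: eq_bigr => b _; rewrite FG. Qed.

Lemma sum_g_contract (F : 'I_m -> 'I_m -> mx) :
  \sum_a \sum_b g (F a b *m E b) (E a) = contract F.
Proof. by apply: eq_bigr => a _; apply: eq_bigr => b _; rewrite g_mulmxE. Qed.

Lemma contractD (F G : 'I_m -> 'I_m -> mx) :
  contract (fun a b => F a b + G a b) = contract F + contract G.
Proof.
rewrite /contract -big_split; apply: eq_bigr => a _.
by rewrite -big_split; apply: eq_bigr => b _; rewrite mxE.
Qed.

Lemma contractN (F : 'I_m -> 'I_m -> mx) :
  contract (fun a b => - F a b) = - contract F.
Proof.
rewrite /contract -sumrN; apply: eq_bigr => a _.
by rewrite -sumrN; apply: eq_bigr => b _; rewrite mxE.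
Qed.

Lemma contractZ c (F : 'I_m -> 'I_m -> mx) :
  contract (fun a b => c *: F a b) = c * contract F.
Proof.
rewrite /contract mulr_sumr; apply: eq_bigr => a _.
by rewrite mulr_sumr; apply: eq_bigr => b _; rewrite mxE.
Qed.

Lemma contract_mulmxZ (F : 'I_m -> 'I_m -> mx) :
  contract (fun a b => F a b *m Z) = \sum_a F a zi a zi.
Proof.
by apply: eq_bigr => a _; under eq_bigr do rewrite mulmxZ_entry; rewrite sum_mul_delta.
Qed.

Lemma contract_Zmulmx (F : 'I_m -> 'I_m -> mx) :
  contract (fun a b => Z *m F a b) = \sum_b F zi b zi b.
Proof.
rewrite /contract exchange_big; apply: eq_bigr => b _.
by under eq_bigr do rewrite Zmulmx_entry; rewrite sum_delta_mul.
Qed.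

Lemma contract_mulmxZmulmx (F G : 'I_m -> 'I_m -> mx) :
  contract (fun a b => F a b *m Z *m G a b) = \sum_a \sum_b F a b a zi * G a b zi b.
Proof. by apply: eq_bigr => a _; apply: eq_bigr => b _; rewrite mulmxZmulmx_entry. Qed.

Lemma contract_proj_perp (phi : mx) (F : 'I_m -> 'I_m -> mx) :
  contract (fun a b => proj_perp phi (F a b)) =
  2^-1 * (contract F + contract (fun a b => phi *m F a b *m phi)
          + \sum_b F zi b zi b + \sum_a F a zi a zi).
Proof.
rewrite /proj_perp contractZ !contractD -contract_Zmulmx -contract_mulmxZ.
by congr (_ * (_ + _ + _ + _)); apply: eq_contract => a b; rewrite mulmxA.
Qed.

Lemma Ric_zeta (Rm : 'I_m -> 'I_m -> mx) : Ric Rm zeta zeta = \sum_a Rm zi a zi a.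
Proof.
apply: eq_bigr => a _; rewrite (bigD1 zi) //= big1 ?addr0 => [|c /negbTE czi].
  by rewrite zeta_entry eqxx scale1r g_mulmxE.
by rewrite zeta_entry czi scale0r mul0mx.
Qed.

Section AlmostContact.
Variable phi : mx.
Hypothesis acm : acm_structure phi.

Lemma phi_sqr : phi *m phi = Z - 1%:M.
Proof.
apply: mx_ext_mulmx => X.
by rewrite -mulmxA (proj1 acm) mulmxBl mul1mx eta_scale addrC.
Qed.

Lemma trmx_phi_phi : phi^T *m phi = 1%:M - Z.
Proof.
apply/matrixP=> a b; have := (proj2 acm) (E a) (E b).
rewrite g_mulmxl g_sym mulmxA g_mulmxE => ->.
by rewrite /Defs.eta !g_E !mxE big_ord1 !mxE !(eq_sym zi) (eq_sym b).
Qed.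

Lemma phi_zeta : phi *m zeta = 0.
Proof.
apply: trmx_mul_self_eq0.
rewrite trmx_mul -mulmxA (mulmxA phi^T) trmx_phi_phi mulmxBl mul1mx mulmxBr.
by rewrite !mulmxA trmx_zeta_zeta mul1mx trmx_zeta_zeta subrr.
Qed.

Lemma phi_Z : phi *m Z = 0.
Proof. by rewrite mulmxA phi_zeta mul0mx. Qed.

Lemma Z_phi : Z *m phi = 0.
Proof.
have : phi *m (phi *m phi) = phi *m phi *m phi by rewrite mulmxA.
rewrite phi_sqr mulmxBr mulmxBl phi_Z mulmx1 mul1mx sub0r => /eqP.
by rewrite eq_sym subr_eq addNr => /eqP.
Qed.

Lemma trmx_zeta_phi : zeta^T *m phi = 0.
Proof.
rewrite -[zeta^T]mul1mx -trmx_zeta_zeta -!mulmxA (mulmxA zeta) Z_phi.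
by rewrite mulmx0.
Qed.

Lemma trmx_phi : phi^T = - phi.
Proof.
have : phi^T *m (phi *m phi) = phi^T *m phi *m phi by rewrite mulmxA.
rewrite phi_sqr trmx_phi_phi mulmxBr mulmxBl Z_phi mulmx1 mul1mx subr0.
rewrite mulmxA -[zeta in phi^T *m zeta]trmxK -trmx_mul trmx_zeta_phi trmx0 mul0mx.
by rewrite sub0r => h; rewrite -[in RHS]h opprK.
Qed.

Lemma mulmx_phi_entry_max (A : mx) i : (A *m phi) i zi = 0.
Proof. by rewrite -mulmxE_entry -mulmxA phi_zeta mulmx0 mxE. Qed.

Lemma mulmx_phi_phi k (x : 'M_(k, m)) : x *m phi *m phi = x *m zeta *m zeta^T - x.
Proof. by rewrite -mulmxA phi_sqr mulmxBr mulmx1 mulmxA. Qed.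

Lemma mulmx_phi_zeta k (x : 'M_(k, m)) : x *m phi *m zeta = 0.
Proof. by rewrite -mulmxA phi_zeta mulmx0. Qed.

Lemma mulmx_zetaT_phi k (x : 'M_(k, 1)) : x *m zeta^T *m phi = 0.
Proof. by rewrite -mulmxA trmx_zeta_phi mulmx0. Qed.

Lemma mulmx_zetaT_zeta k (x : 'M_(k, 1)) : x *m zeta^T *m zeta = x.
Proof. by rewrite -mulmxA trmx_zeta_zeta mulmx1. Qed.

Lemma mulmx_skew_zeta k (x : 'M_(k, 1)) (A : mx) :
  A^T = - A -> x *m zeta^T *m A *m zeta = 0.
Proof. by move=> skA; rewrite -!mulmxA (mulmxA zeta^T) skew_zeta // mulmx0. Qed.

Local Ltac mx_expand := repeat progress rewrite ?(mulmxDl, mulmxDr, mulmxBl, mulmxBr,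
  mulmxN, mulNmx, mulmxA, mulmx1, mul1mx, mulmx0, mul0mx, opprK, scalerN,
  scalerDr, scalerBr, scaler0) -?scalemxAl -?scalemxAr.
Local Ltac phi_simp := rewrite ?(phi_sqr, mulmx_phi_phi, mulmx_phi_zeta, mulmx_zetaT_phi,
  mulmx_zetaT_zeta, phi_zeta, trmx_zeta_phi, trmx_zeta_zeta, mulmx0, mul0mx,
  mulmx1, mul1mx).
Local Ltac mx_entrywise := apply/matrixP => i j; rewrite !mxE; lra.

(* For skew [T] this is equivalent to [proj_perp phi T = T]. *)
Definition u_perp (T : mx) : Prop :=
  T^T = - T /\ T *m phi + phi *m T = Z *m T *m phi + phi *m T *m Z.

Lemma proj_perp_u_perp (G : mx) : G^T = - G -> u_perp (proj_perp phi G).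
Proof.
move=> skG; rewrite /proj_perp; split.
  rewrite linearZ /= !raddfD /= !trmx_mul !trmxK skG trmx_phi.
  by mx_expand; mx_entrywise.
by mx_expand; phi_simp; mx_expand; phi_simp; mx_entrywise.
Qed.

Lemma u_perpN (T : mx) : u_perp T -> u_perp (- T).
Proof.
case=> skT aT; split; first by rewrite raddfN /= skT.
by rewrite !(mulNmx, mulmxN) -!opprD aT.
Qed.

Lemma phi_mulmx_phi (Ta Tb : mx) : u_perp Ta -> u_perp Tb ->
  phi *m Ta *m Tb *m phi =
  Ta *m Z *m Tb - Ta *m Tb + Ta *m Tb *m Z + Z *m Ta *m Tb - Z *m Ta *m Tb *m Z
  + phi *m Ta *m Z *m Tb *m phi.
Proof.
move=> [skTa aTa] [skTb aTb].
have phiTa : phi *m Ta = - (Ta *m phi) + Z *m Ta *m phi + phi *m Ta *m Z.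
  by rewrite -addrA -aTa addrA addNr add0r.
have Tbphi : Tb *m phi = - (phi *m Tb) + Z *m Tb *m phi + phi *m Tb *m Z.
  by rewrite -addrA -aTb addrCA addNr addr0.
rewrite -(mulmxA (phi *m Ta)) Tbphi phiTa.
mx_expand; phi_simp; mx_expand.
rewrite ?(mulmx_skew_zeta _ skTa, mulmx_skew_zeta _ skTb, mulmx0, mul0mx).
mx_entrywise.
Qed.

Lemma proj_perp_commutator (Ta Tb : mx) : u_perp Ta -> u_perp Tb ->
  proj_perp phi (Ta *m Tb - Tb *m Ta) =
  (Ta *m Tb - Tb *m Ta) *m Z + Z *m (Ta *m Tb - Tb *m Ta)
  + 2^-1 *: (Ta *m Z *m Tb - Tb *m Z *m Ta
             + (phi *m Ta) *m Z *m (Tb *m phi) - (phi *m Tb) *m Z *m (Ta *m phi)).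
Proof.
move=> pTa pTb.
have ZCZ : Z *m (Ta *m Tb - Tb *m Ta) *m Z = 0.
  by rewrite mulmxA mulmx_skew_zeta ?mul0mx // (commutator_skew (proj1 pTa) (proj1 pTb)).
move: ZCZ; rewrite /proj_perp; mx_expand.
rewrite (phi_mulmx_phi pTa pTb) (phi_mulmx_phi pTb pTa) => /matrixP ZCZ.
mx_expand; apply/matrixP => i j; move: (ZCZ i j); rewrite !mxE; lra.
Qed.

Section Torsion.
Variable Gamma : 'I_m -> mx.
Hypothesis skGamma : forall a, (Gamma a)^T = - Gamma a.
Local Notation T := (xi Gamma phi).

Lemma xi_proj_perp a : T a = - proj_perp phi (Gamma a).
Proof.
rewrite /xi /nabla_phi /nabla_zeta /proj_perp trmx_mul skGamma.
by mx_expand; phi_simp; mx_expand; mx_entrywise.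
Qed.

Lemma xi_u_perp a : u_perp (T a).
Proof. by rewrite xi_proj_perp; apply/u_perpN/proj_perp_u_perp. Qed.

Lemma xi_skew a : (T a)^T = - T a.
Proof. exact: (proj1 (xi_u_perp a)). Qed.

Lemma xi_skew_entry a i j : T a i j = - T a j i.
Proof. exact: skew_entry (xi_skew a). Qed.

Lemma xi_entry_max a : T a zi zi = 0.
Proof. by have := xi_skew_entry a zi zi; lra. Qed.

Lemma phi_xi_entry a i j : (phi *m T a) i j = (T a *m phi) j i.
Proof.
have : (phi *m T a)^T = T a *m phi.
  by rewrite trmx_mul xi_skew trmx_phi mulNmx mulmxN opprK.
by move/matrixP/(_ j i); rewrite mxE.
Qed.

Lemma xiv_E c : xiv Gamma phi (E c) = T c.
Proof.
rewrite /xiv (bigD1 c) //= E_entry eqxx scale1r big1 ?addr0 // => k /negbTE kc.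
by rewrite E_entry kc scale0r.
Qed.

Lemma alpha_E c b a : alpha Gamma phi (E c) (E b) (E a) = T c a b.
Proof. by rewrite /alpha xiv_E g_mulmxE. Qed.

Lemma alpha_phi_E c b a : alpha Gamma phi (E c) (phi *m E b) (E a) = (T c *m phi) a b.
Proof. by rewrite /alpha xiv_E mulmxA g_mulmxE. Qed.

Lemma alpha_phi_phi_E j i a :
  alpha Gamma phi (phi *m E j) (phi *m E i) (E a) = \sum_c phi c j * (T c *m phi) a i.
Proof.
rewrite /alpha /xiv mulmxA g_mulmxE mulmx_suml summxE.
by apply: eq_bigr => c _; rewrite mulmxE_entry -scalemxAl mxE.
Qed.

Lemma contract_xi_Z_xi : contract (fun a b => T a *m Z *m T b) = - i10 Gamma phi.
Proof.
rewrite contract_mulmxZmulmx /i10 /Defs.zeta.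
under [in RHS]eq_bigr do under eq_bigr do rewrite !alpha_E.
rewrite sum_neq_max2 => [|i|j]; rewrite ?xi_entry_max ?mulr0 ?mul0r //.
rewrite -sumrN; apply: eq_bigr => a _; rewrite -sumrN; apply: eq_bigr => b _.
by rewrite (xi_skew_entry a a zi) mulNr.
Qed.

Lemma contract_xi_Z_xi_swap : contract (fun a b => T b *m Z *m T a) = - i8 Gamma phi.
Proof.
rewrite contract_mulmxZmulmx /i8 /Defs.zeta.
under [in RHS]eq_bigr do under eq_bigr do rewrite !alpha_E.
rewrite sum_neq_max2 => [|i|j]; rewrite ?xi_entry_max ?mulr0 ?mul0r //.
rewrite -sumrN; apply: eq_bigr => a _; rewrite -sumrN; apply: eq_bigr => b _.
by rewrite (xi_skew_entry b a zi) mulNr mulrC.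
Qed.

Lemma contract_phi_xi_Z_xi_phi :
  contract (fun a b => (phi *m T a) *m Z *m (T b *m phi)) = i14 Gamma phi.
Proof.
rewrite contract_mulmxZmulmx /i14 /Defs.zeta.
under [in RHS]eq_bigr do under eq_bigr do rewrite !alpha_phi_E.
rewrite sum_neq_max2 => [|i|j]; rewrite ?mulmx_phi_entry_max ?mulr0 ?mul0r //.
by apply: eq_bigr => a _; apply: eq_bigr => b _; rewrite phi_xi_entry.
Qed.

Lemma contract_phi_xi_Z_xi_phi_swap :
  contract (fun a b => (phi *m T b) *m Z *m (T a *m phi)) = - i12 Gamma phi.
Proof.
rewrite contract_mulmxZmulmx /i12 /Defs.zeta.
under [in RHS]eq_bigr do under eq_bigr do rewrite alpha_E alpha_phi_phi_E.
rewrite sum_neq_max2 => [|i|j]; first last.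
- by rewrite big1 ?mulr0 // => c _; rewrite mulmx_phi_entry_max mulr0.
- by rewrite xi_entry_max mul0r.
rewrite exchange_big -sumrN; apply: eq_bigr => b _.
under [X in _ = - X]eq_bigr do rewrite mulr_sumr.
rewrite [in RHS]exchange_big -sumrN; apply: eq_bigr => a _.
rewrite mxE mulr_suml -sumrN; apply: eq_bigr => j _.
by rewrite (xi_skew_entry b j zi); ring.
Qed.

Lemma sum_commutator_max :
  \sum_a (T a *m T zi - T zi *m T a) a zi = \sum_b (T zi *m T b - T b *m T zi) zi b.
Proof.
apply: eq_bigr => a _.
rewrite (skew_entry _ _ (commutator_skew (xi_skew a) (xi_skew zi))).
by rewrite -[in RHS]opprB [in RHS]mxE.
Qed.

Lemma i7E : i7 Gamma phi =
  \sum_j \sum_k T zi k j * T j k zi - \sum_k T zi k zi * T zi k zi.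
Proof.
rewrite /i7 /Defs.zeta; under eq_bigr do under eq_bigr do rewrite !alpha_E.
by under eq_bigr do rewrite sum_neq_max xi_entry_max mulr0 subr0; rewrite sum_neq_max.
Qed.

Lemma i17E : i17 Gamma phi =
  \sum_i \sum_k T i k i * T zi k zi - \sum_k T zi k zi * T zi k zi.
Proof.
rewrite /i17 /Defs.zeta; under eq_bigr do under eq_bigr do rewrite !alpha_E.
by under eq_bigr do rewrite sum_neq_max xi_entry_max mulr0 subr0; rewrite sum_neq_max.
Qed.

Lemma i7_sub_i17 :
  i7 Gamma phi - i17 Gamma phi = \sum_b (T zi *m T b - T b *m T zi) zi b.
Proof.
rewrite i7E i17E.
under [RHS]eq_bigr => b _ do rewrite !mxE.
rewrite sumrB.
have -> : \sum_b \sum_j T zi zi j * T b j b = - \sum_i \sum_k T i k i * T zi k zi.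
  rewrite -sumrN; apply: eq_bigr => b _; rewrite -sumrN; apply: eq_bigr => k _.
  by rewrite (xi_skew_entry zi zi k) mulNr mulrC.
have -> : \sum_b \sum_j T b zi j * T zi j b = - \sum_j \sum_k T zi k j * T j k zi.
  rewrite -sumrN; apply: eq_bigr => b _; rewrite -sumrN; apply: eq_bigr => k _.
  by rewrite (xi_skew_entry b zi k) mulNr mulrC.
ring.
Qed.

Lemma s_alt_perp_formula :
  s_alt_perp Gamma phi =
  2^-1 * (i8 Gamma phi - i10 Gamma phi + i12 Gamma phi + i14 Gamma phi)
  + 2 * (i7 Gamma phi - i17 Gamma phi).
Proof.
rewrite /s_alt_perp sum_g_contract.
rewrite (eq_contract (fun a b => proj_perp_commutator (xi_u_perp a) (xi_u_perp b))).
rewrite !(contractD, contractN, contractZ) contract_mulmxZ contract_Zmulmx /=.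
rewrite contract_xi_Z_xi contract_xi_Z_xi_swap contract_phi_xi_Z_xi_phi.
rewrite contract_phi_xi_Z_xi_phi_swap sum_commutator_max -i7_sub_i17.
ring.
Qed.

End Torsion.

Lemma scal_star_contract (Rm : 'I_m -> 'I_m -> mx) :
  scal_star Rm phi = - contract (fun a b => phi *m Rm a b *m phi).
Proof.
rewrite /scal_star -contractN -sum_g_contract; apply: eq_bigr => a _; apply: eq_bigr => b _.
by rewrite g_sym g_mulmxl g_sym trmx_phi !mulmxA !mulNmx.
Qed.

Lemma s_perp_formula (Rm : 'I_m -> 'I_m -> mx) :
  (forall a b, Rm b a = - Rm a b) -> (forall a b, (Rm a b)^T = - Rm a b) ->
  s_perp Rm phi = 2^-1 * (scal Rm - scal_star Rm phi) + Ric Rm zeta zeta.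
Proof.
move=> RmN skRm.
rewrite /s_perp /scal !sum_g_contract contract_proj_perp scal_star_contract Ric_zeta.
have -> : \sum_a Rm a zi a zi = \sum_a Rm zi a zi a.
  by apply: eq_bigr => a _; rewrite RmN mxE (skew_entry a zi (skRm zi a)) opprK.
lra.
Qed.

End AlmostContact.
End Frame.

Theorem mainTheorem11 (R : realFieldType) (n : nat)
  (phi : 'M[R]_((n.*2).+1))
  (Gamma : 'I_((n.*2).+1) -> 'M[R]_((n.*2).+1))
  (Rm : 'I_((n.*2).+1) -> 'I_((n.*2).+1) -> 'M[R]_((n.*2).+1)) :
  acm_structure phi ->
  (forall a, (Gamma a)^T = - Gamma a) ->
  algebraic_curvature Rm ->
  s_alt_perp Gamma phi
    = 2^-1 * (i8 Gamma phi - i10 Gamma phi + i12 Gamma phi + i14 Gamma phi)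
      + 2 * (i7 Gamma phi - i17 Gamma phi)
  /\ s_perp Rm phi
    = 2^-1 * (scal Rm - scal_star Rm phi) + Ric Rm (@zeta R n) (@zeta R n).
Proof.
move=> acm skGamma [RmN [skRm _]]; split.
- exact: (s_alt_perp_formula acm skGamma).
- exact: (s_perp_formula acm RmN skRm).
Qed.
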